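(* (Extension Lemma.) Let $\Gamma$ be an abstract consistency class and $A\in\Gamma$. Then there exists an evident branch $E$ with $A\subseteq E$. Moreover, if $\Gamma$ is complete, there exists a complete evident branch $E$ with $A\subseteq E$.
   Context: Types: a countable set of base types including a distinguished $o$; other base types are sorts ($\alpha$). Types: base types and $\sigma\tau$ (functions from $\sigma$ to $\tau$; $\sigma\tau\mu=\sigma(\tau\mu)$). Countably many names, each with a unique type, infinitely many of each type. Terms: names; $st:\mu$ for $s:\tau\mu,t:\tau$; $\lambda x.t:\sigma\tau$ for a name $x:\sigma$, $t:\tau$. Logical constants: $\neg:oo$, $=_\sigma:\sigma\sigma o$; all other names are variables. Formulas: terms of type $o$; $s=_\sigma t$ is $(=_\sigma s)t$; $s\neq_\sigma t$ is $\neg(s=_\sigma t)$. A fixed type-preserving total normalization operator $[\cdot]$ on terms is given; $s$ is normal iff $[s]=s$; it satisfies $[[s]]=[s]$, $[[s]t]=[st]$, and $[xs_1\dots s_n]=x[s_1]\dots[s_n]$ for every name $x$ and $n\ge0$ with $xs_1\dots s_n$ of base type. A branch is a set of normal formulas. A branch $E$ is evident if ($x$ ranges over variables): (DN) $\neg\neg s\in E\Rightarrow s\in E$; (BQ) $s=_ot\in E\Rightarrow$ ($s,t\in E$ or $\neg s,\neg t\in E$); (BE) $s\neq_ot\in E\Rightarrow$ ($s,\neg t\in E$ or $\neg s,t\in E$); (FQ) $s=_{\sigma\tau}t\in E\Rightarrow[su]=[tu]\in E$ for every normal $u:\sigma$; (FE) $s\neq_{\sigma\tau}t\in E\Rightarrow[sx]\neq[tx]\in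 E$ for some variable $x$; (Mat) if $xs_1\dots s_n,\neg xt_1\dots t_n\in E$ then $n\ge1$ and $s_i\neq t_i\in E$ for some $i$; (Dec) if $xs_1\dots s_n\neq_\alpha xt_1\dots t_n\in E$ then $n\ge1$ and $s_i\neq t_i\in E$ for some $i$; (Con) if $s=_\alpha t,u\neq_\alpha v\in E$ then ($s\neq u,t\neq u\in E$) or ($s\neq v,t\neq v\in E$). $E$ is complete if for every normal formula $s$, $s\in E$ or $\neg s\in E$. An abstract consistency class is a set $\Gamma$ of branches such that every $A\in\Gamma$ satisfies: (DN) if $\neg\neg s\in A$ then $A\cup\{s\}\in\Gamma$; (BQ) if $s=_ot\in A$ then $A\cup\{s,t\}\in\Gamma$ or $A\cup\{\neg s,\neg t\}\in\Gamma$; (BE) if $s\neq_ot\in A$ then $A\cup\{s,\neg t\}\in\Gamma$ or $A\cup\{\neg s,t\}\in\Gamma$; (FQ) if $s=_{\sigma\tau}t\in A$ then $A\cup\{[su]=[tu]\}\in\Gamma$ for every normal $u:\sigma$; (FE) if $s\neq_{\sigma\tau}t\in A$ then $A\cup\{[sx]\neq[tx]\}\in\Gamma$ for some variable $x$; (Mat) if $xs_1\dots s_n\in A$ and $\neg xt_1\dots t_n\in A$ then $n\ge1$ and $A\cup\{s_i\neq t_i\}\in\Gamma$ for some $i$; (Dec) if $xs_1\dots s_n\neq_\alpha xt_1\dots t_n\in A$ then $n\ge1$ and $A\cup\{s_i\neq t_i\}\in\Gamma$ for some $i$; (Con) if $s=_\alpha t$ and $u\neq_\alpha v$ are in $A$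 then $A\cup\{s\neq u,t\neq u\}\in\Gamma$ or $A\cup\{s\neq v,t\neq v\}\in\Gamma$. $\Gamma$ is complete if for every $A\in\Gamma$ and every normal formula $s$, $A\cup\{s\}\in\Gamma$ or $A\cup\{\neg s\}\in\Gamma$. *)

From mathcomp Require Import all_boot.
Set Implicit Arguments. Unset Strict Implicit. Unset Printing Implicit Defensive.

Inductive ty (B : Type) : Type :=
| Base of B
| Arr of ty B & ty B.

Inductive term (B N : Type) : Type :=
| Var of N
| Neg
| Eq of ty B
| App of term B N & term B N
| Lam of N & term B N.

Arguments Neg {B N}.
Arguments Eq {B N}.

Section STT.
Variables (B : countType) (o : B) (N : countType) (nty : N -> ty B).

Local Notation ty := (ty B).
Local Notation term := (term B N).
Local Notation tO := (Base o).

Inductive has_ty : term -> ty -> Prop :=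
| ht_var x : has_ty (Var B x) (nty x)
| ht_neg : has_ty Neg (Arr tO tO)
| ht_eq s : has_ty (Eq s) (Arr s (Arr s tO))
| ht_app s t a b : has_ty s (Arr a b) -> has_ty t a -> has_ty (App s t) b
| ht_lam x t b : has_ty t b -> has_ty (Lam x t) (Arr (nty x) b).

Definition apps (h : term) (ss : seq term) : term := foldl (@App B N) h ss.

Definition is_name (h : term) : Prop :=
  (exists x, h = Var B x) \/ h = Neg \/ (exists s, h = Eq s).

Record normalizer (norm : term -> term) : Prop := {
  norm_ty : forall s sg, has_ty s sg -> has_ty (norm s) sg;
  norm_idem : forall s sg, has_ty s sg -> norm (norm s) = norm s;
  norm_app : forall s t tau, has_ty (App s t) tau ->
      norm (App (norm s) t) = norm (App s t);
  norm_head : forall h ss b, is_name h -> has_ty (apps h ss) (Base b) ->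
      norm (apps h ss) = apps h (map norm ss)
}.

Variable norm : term -> term.

Definition eqf (sg : ty) (s t : term) : term := App (App (Eq sg) s) t.
Definition neg (s : term) : term := App Neg s.
Definition neqf (sg : ty) (s t : term) : term := neg (eqf sg s t).

Definition is_sort (a : ty) : Prop := exists b, a = Base b /\ b <> o.
Definition normal (s : term) : Prop := norm s = s.
Definition nformula (s : term) : Prop := has_ty s tO /\ normal s.

Definition branch (A : term -> Prop) : Prop := forall s, A s -> nformula s.

Record evident (E : term -> Prop) : Prop := {
  ev_DN : forall s, E (neg (neg s)) -> E s;
  ev_BQ : forall s t, E (eqf tO s t) ->
      (E s /\ E t) \/ (E (neg s) /\ E (neg t));
  ev_BE : forall s t, E (neqf tO s t) ->
      (E s /\ E (neg t)) \/ (E (neg s) /\ E t);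
  ev_FQ : forall sg tau s t, E (eqf (Arr sg tau) s t) ->
      forall u, has_ty u sg -> normal u ->
      E (eqf tau (norm (App s u)) (norm (App t u)));
  ev_FE : forall sg tau s t, E (neqf (Arr sg tau) s t) ->
      exists x, nty x = sg /\
        E (neqf tau (norm (App s (Var B x))) (norm (App t (Var B x))));
  ev_Mat : forall x ss ts, size ss = size ts ->
      E (apps (Var B x) ss) -> E (neg (apps (Var B x) ts)) ->
      0 < size ss /\ exists i sg, i < size ss /\
        E (neqf sg (nth Neg ss i) (nth Neg ts i));
  ev_Dec : forall a x ss ts, is_sort a -> size ss = size ts ->
      E (neqf a (apps (Var B x) ss) (apps (Var B x) ts)) ->
      0 < size ss /\ exists i sg, i < size ss /\
        E (neqf sg (nth Neg ss i) (nth Neg ts i));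
  ev_Con : forall a s t u v, is_sort a -> E (eqf a s t) -> E (neqf a u v) ->
      (E (neqf a s u) /\ E (neqf a t u)) \/ (E (neqf a s v) /\ E (neqf a t v))
}.

Definition complete_branch (E : term -> Prop) : Prop :=
  forall s, nformula s -> E s \/ E (neg s).

Definition ext1 (A : term -> Prop) (s : term) : term -> Prop :=
  fun u => A u \/ u = s.
Definition ext2 (A : term -> Prop) (s t : term) : term -> Prop :=
  fun u => A u \/ u = s \/ u = t.

Record acc (G : (term -> Prop) -> Prop) : Prop := {
  acc_branch : forall A, G A -> branch A;
  acc_DN : forall A s, G A -> A (neg (neg s)) -> G (ext1 A s);
  acc_BQ : forall A s t, G A -> A (eqf tO s t) ->
      G (ext2 A s t) \/ G (ext2 A (neg s) (neg t));
  acc_BE : forall A s t, G A -> A (neqf tO s t) ->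
      G (ext2 A s (neg t)) \/ G (ext2 A (neg s) t);
  acc_FQ : forall A sg tau s t, G A -> A (eqf (Arr sg tau) s t) ->
      forall u, has_ty u sg -> normal u ->
      G (ext1 A (eqf tau (norm (App s u)) (norm (App t u))));
  acc_FE : forall A sg tau s t, G A -> A (neqf (Arr sg tau) s t) ->
      exists x, nty x = sg /\
        G (ext1 A (neqf tau (norm (App s (Var B x))) (norm (App t (Var B x)))));
  acc_Mat : forall A x ss ts, G A -> size ss = size ts ->
      A (apps (Var B x) ss) -> A (neg (apps (Var B x) ts)) ->
      0 < size ss /\ exists i sg, i < size ss /\
        G (ext1 A (neqf sg (nth Neg ss i) (nth Neg ts i)));
  acc_Dec : forall A a x ss ts, G A -> is_sort a -> size ss = size ts ->
      A (neqf a (apps (Var B x) ss) (apps (Var B x) ts)) ->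
      0 < size ss /\ exists i sg, i < size ss /\
        G (ext1 A (neqf sg (nth Neg ss i) (nth Neg ts i)));
  acc_Con : forall A a s t u v, G A -> is_sort a ->
      A (eqf a s t) -> A (neqf a u v) ->
      G (ext2 A (neqf a s u) (neqf a t u)) \/ G (ext2 A (neqf a s v) (neqf a t v))
}.

Definition complete_acc (G : (term -> Prop) -> Prop) : Prop :=
  forall A, G A -> forall s, nformula s -> G (ext1 A s) \/ G (ext1 A (neg s)).

End STT.

(* Code every instance of every evidence condition (and every choice between
   [s] and [~ s]) as an element of a countable type of obligations.  Starting
   from A, build a chain of members of the class whose step n discharges, by the
   matching closure condition of the class, the obligation coded by the first
   Cantor component of n.  Each obligation is revisited after every stage, so
   one that becomes due at some stage is met in the union of the chain, which
   is therefore evident; it is complete when the class is. *)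
From Stdlib Require Import Cantor ClassicalEpsilon Classical Lia.
From HB Require Import structures.
From mathcomp Require Import all_boot.

Set Implicit Arguments.
Unset Strict Implicit.
Unset Printing Implicit Defensive.

Section FairChain.
Variables (T : Type) (I : countType) (G : (T -> Prop) -> Prop).
Variables (due met : I -> (T -> Prop) -> Prop).

Definition incl (X Y : T -> Prop) : Prop := forall s, X s -> Y s.
Definition union (C : nat -> T -> Prop) (s : T) : Prop := exists n, C n s.
Definition chain (C : nat -> T -> Prop) : Prop :=
  forall m n, m <= n -> incl (C m) (C n).

Lemma incl_union C n : incl (C n) (union C).
Proof. by move=> s; exists n. Qed.

Lemma union2_chain C s t : chain C -> union C s -> union C t ->
  exists n, C n s /\ C n t.
Proof.
move=> hC [i hi] [j hj]; exists (maxn i j).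
by split; [exact: hC (leq_maxl i j) _ hi | exact: hC (leq_maxr i j) _ hj].
Qed.

Hypothesis due_mono : forall i X Y, incl X Y -> due i X -> due i Y.
Hypothesis met_mono : forall i X Y, incl X Y -> met i X -> met i Y.
Hypothesis discharge : forall i X, G X -> due i X ->
  exists Y, [/\ G Y, incl X Y & met i Y].

Lemma exists_extension i X :
  exists Y, [/\ G X -> G Y, incl X Y & G X -> due i X -> met i Y].
Proof.
have [[GX dX] | nd] := classic (G X /\ due i X).
  by have [Y [GY XY mY]] := discharge GX dX; exists Y.
by exists X; split=> // GX dX; case: nd.
Qed.

Definition extension i X : T -> Prop :=
  proj1_sig (constructive_indefinite_description _ (exists_extension i X)).

Lemma extensionP i X :
  [/\ G X -> G (extension i X), incl X (extension i X)
    & G X -> due i X -> met i (extension i X)].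
Proof. by rewrite /extension; case: constructive_indefinite_description. Qed.

Variable A : T -> Prop.

Fixpoint stage (n : nat) : T -> Prop :=
  if n is n'.+1 then
    if unpickle (of_nat n').1 is Some i then extension i (stage n')
    else stage n'
  else A.

Lemma stage_step n : [/\ G (stage n) -> G (stage n.+1),
  incl (stage n) (stage n.+1)
  & forall i, unpickle (of_nat n).1 = Some i ->
      G (stage n) -> due i (stage n) -> met i (stage n.+1)].
Proof.
rewrite /=; case: (unpickle _) => [i|]; last by split=> // s.
by have [? ? ?] := extensionP i (stage n); split=> // j [<-].
Qed.

Lemma chain_stage : chain stage.
Proof.
move=> m n /subnKC <-; elim: (n - m) => [|k IH]; first by rewrite addn0.
by rewrite addnS => s /IH; have [_ + _] := stage_step (m + k); apply.
Qed.

Hypothesis GA : G A.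

Lemma G_stage n : G (stage n).
Proof. by elim: n => // n; have [+ _ _] := stage_step n. Qed.

(* Obligation i is handled at step to_nat (pickle i, n), which comes after n. *)
Lemma met_union_stage i n : due i (stage n) -> met i (union stage).
Proof.
move=> dn; set m := to_nat (pickle i, n).
have le_nm : n <= m.
  by apply/leP; have := to_nat_non_decreasing (pickle i) n; lia.
have dm : due i (stage m) := due_mono (chain_stage le_nm) dn.
have [_ _ hm] := stage_step m.
apply: met_mono (@incl_union _ m.+1) _.
apply: hm dm; last exact: G_stage.
by rewrite /m cancel_of_to pickleK.
Qed.

Lemma exists_fair_chain : exists C, [/\ C 0 = A, forall n, G (C n), chain C
  & forall i n, due i (C n) -> met i (union C)].
Proof.
exists stage; split=> //; [exact: G_stage | exact: chain_stage |].
exact: met_union_stage.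
Qed.

End FairChain.

Fixpoint tree_of_ty (B : Type) (a : ty B) : GenTree.tree B :=
  match a with
  | Base b => GenTree.Leaf b
  | Arr a1 a2 => GenTree.Node 0 [:: tree_of_ty a1; tree_of_ty a2]
  end.

Fixpoint ty_of_tree (B : Type) (t : GenTree.tree B) : option (ty B) :=
  match t with
  | GenTree.Leaf b => Some (Base b)
  | GenTree.Node 0 [:: t1; t2] =>
      if (ty_of_tree t1, ty_of_tree t2) is (Some a1, Some a2)
      then Some (Arr a1 a2) else None
  | _ => None
  end.

Lemma tree_of_tyK (B : Type) : pcancel (@tree_of_ty B) (@ty_of_tree B).
Proof. by elim=> //= a -> b ->. Qed.

HB.instance Definition _ (B : countType) :=
  Countable.copy (ty B) (pcan_type (@tree_of_tyK B)).

Fixpoint tree_of_term (B N : Type) (s : term B N) : GenTree.tree (ty B + N) :=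
  match s with
  | Var x => GenTree.Leaf (inr x)
  | Neg => GenTree.Node 0 [::]
  | Eq a => GenTree.Leaf (inl a)
  | App s1 s2 => GenTree.Node 1 [:: tree_of_term s1; tree_of_term s2]
  | Lam x s1 => GenTree.Node 2 [:: GenTree.Leaf (inr x); tree_of_term s1]
  end.

Fixpoint term_of_tree (B N : Type) (t : GenTree.tree (ty B + N)) : term B N :=
  match t with
  | GenTree.Leaf (inr x) => Var B x
  | GenTree.Leaf (inl a) => Eq a
  | GenTree.Node 1 [:: t1; t2] => App (term_of_tree t1) (term_of_tree t2)
  | GenTree.Node 2 [:: GenTree.Leaf (inr x); t1] => Lam x (term_of_tree t1)
  | _ => Neg
  end.

Lemma tree_of_termK (B N : Type) :
  cancel (@tree_of_term B N) (@term_of_tree B N).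
Proof. by elim=> //= [s -> t ->|x t ->]. Qed.

HB.instance Definition _ (B N : countType) :=
  Countable.copy (term B N) (can_type (@tree_of_termK B N)).

(* One constructor per evidence condition, plus [ObCom s]: decide s or ~ s. *)
Inductive obligation (B N : Type) : Type :=
| ObDN of term B N
| ObBQ of term B N & term B N
| ObBE of term B N & term B N
| ObFQ of ty B & ty B & term B N & term B N & term B N
| ObFE of ty B & ty B & term B N & term B N
| ObMat of N & seq (term B N) & seq (term B N)
| ObDec of ty B & N & seq (term B N) & seq (term B N)
| ObCon of ty B & term B N & term B N & term B N & term B N
| ObCom of term B N.

Section ObligationCountable.
Variables B N : countType.

Definition code_of_obligation (b : obligation B N) :
    nat * seq (seq (term B N)) * seq (ty B) * seq N :=
  match b with
  | ObDN s => (0, [:: [:: s]], [::], [::])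
  | ObBQ s t => (1, [:: [:: s; t]], [::], [::])
  | ObBE s t => (2, [:: [:: s; t]], [::], [::])
  | ObFQ a b s t u => (3, [:: [:: s; t; u]], [:: a; b], [::])
  | ObFE a b s t => (4, [:: [:: s; t]], [:: a; b], [::])
  | ObMat x ss ts => (5, [:: ss; ts], [::], [:: x])
  | ObDec a x ss ts => (6, [:: ss; ts], [:: a], [:: x])
  | ObCon a s t u v => (7, [:: [:: s; t; u; v]], [:: a], [::])
  | ObCom s => (8, [:: [:: s]], [::], [::])
  end.

Definition obligation_of_code
    (c : nat * seq (seq (term B N)) * seq (ty B) * seq N) : obligation B N :=
  match c with
  | (0, [:: [:: s]], [::], [::]) => ObDN s
  | (1, [:: [:: s; t]], [::], [::]) => ObBQ s t
  | (2, [:: [:: s; t]], [::], [::]) => ObBE s t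
  | (3, [:: [:: s; t; u]], [:: a; b], [::]) => ObFQ a b s t u
  | (4, [:: [:: s; t]], [:: a; b], [::]) => ObFE a b s t
  | (5, [:: ss; ts], [::], [:: x]) => ObMat x ss ts
  | (6, [:: ss; ts], [:: a], [:: x]) => ObDec a x ss ts
  | (7, [:: [:: s; t; u; v]], [:: a], [::]) => ObCon a s t u v
  | (8, [:: [:: s]], [::], [::]) => ObCom s
  | _ => ObDN Neg
  end.

Lemma code_of_obligationK : cancel code_of_obligation obligation_of_code.
Proof. by case. Qed.

HB.instance Definition _ :=
  Countable.copy (obligation B N) (can_type code_of_obligationK).

End ObligationCountable.

Section Extension.
Variables (B : countType) (o : B) (N : countType) (nty : N -> ty B).
Variables (norm : term B N -> term B N) (G : (term B N -> Prop) -> Prop).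
Hypothesis HG : acc o nty norm G.

Local Notation tO := (Base o).

Definition due (b : obligation B N) (A : term B N -> Prop) : Prop :=
  match b with
  | ObDN s => A (neg (neg s))
  | ObBQ s t => A (eqf tO s t)
  | ObBE s t => A (neqf tO s t)
  | ObFQ sg tau s t u =>
      [/\ A (eqf (Arr sg tau) s t), has_ty o nty u sg & normal norm u]
  | ObFE sg tau s t => A (neqf (Arr sg tau) s t)
  | ObMat x ss ts =>
      [/\ size ss = size ts, A (apps (Var B x) ss)
        & A (neg (apps (Var B x) ts))]
  | ObDec a x ss ts => [/\ is_sort o a, size ss = size ts
      & A (neqf a (apps (Var B x) ss) (apps (Var B x) ts))]
  | ObCon a s t u v => [/\ is_sort o a, A (eqf a s t) & A (neqf a u v)]
  (* choices are only demanded of a complete class *)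
  | ObCom s => complete_acc o nty norm G /\ nformula o nty norm s
  end.

Definition met (b : obligation B N) (E : term B N -> Prop) : Prop :=
  match b with
  | ObDN s => E s
  | ObBQ s t => (E s /\ E t) \/ (E (neg s) /\ E (neg t))
  | ObBE s t => (E s /\ E (neg t)) \/ (E (neg s) /\ E t)
  | ObFQ sg tau s t u => E (eqf tau (norm (App s u)) (norm (App t u)))
  | ObFE sg tau s t => exists x, nty x = sg /\
      E (neqf tau (norm (App s (Var B x))) (norm (App t (Var B x))))
  | ObMat _ ss ts | ObDec _ _ ss ts => 0 < size ss /\
      exists i sg, i < size ss /\ E (neqf sg (nth Neg ss i) (nth Neg ts i))
  | ObCon a s t u v =>
      (E (neqf a s u) /\ E (neqf a t u)) \/ (E (neqf a s v) /\ E (neqf a t v))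
  | ObCom s => E s \/ E (neg s)
  end.

Lemma due_mono b X Y : incl X Y -> due b X -> due b Y.
Proof.
move=> XY; case: b => /=.
- by move=> ? /XY.
- by move=> ? ? /XY.
- by move=> ? ? /XY.
- by move=> ? ? ? ? ? [/XY].
- by move=> ? ? ? ? /XY.
- by move=> ? ? ? [? /XY ? /XY].
- by move=> ? ? ? ? [? ? /XY].
- by move=> ? ? ? ? ? [? /XY ? /XY].
- by [].
Qed.

Lemma met_mono b X Y : incl X Y -> met b X -> met b Y.
Proof.
move=> XY; case: b => /=.
- exact: XY.
- by move=> ? ? [[/XY ? /XY ?]|[/XY ? /XY ?]]; [left|right].
- by move=> ? ? [[/XY ? /XY ?]|[/XY ? /XY ?]]; [left|right].
- by move=> ? ? ? ? ? /XY.
- by move=> ? ? ? ? [x [? /XY ?]]; exists x.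
- by move=> ? ? ? [? [i [sg [? /XY ?]]]]; split => //; exists i, sg.
- by move=> ? ? ? ? [? [i [sg [? /XY ?]]]]; split => //; exists i, sg.
- by move=> ? ? ? ? ? [[/XY ? /XY ?]|[/XY ? /XY ?]]; [left|right].
- by move=> ? [/XY ?|/XY ?]; [left|right].
Qed.

Lemma incl_ext1 (A : term B N -> Prop) s : incl A (ext1 A s).
Proof. by move=> u; left. Qed.

Lemma incl_ext2 (A : term B N -> Prop) s t : incl A (ext2 A s t).
Proof. by move=> u; left. Qed.

Lemma ext1_met b A s : G (ext1 A s) -> met b (ext1 A s) ->
  exists Y, [/\ G Y, incl A Y & met b Y].
Proof. by exists (ext1 A s); split=> //; apply: incl_ext1. Qed.

Lemma ext2_met b A s t : G (ext2 A s t) -> met b (ext2 A s t) ->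
  exists Y, [/\ G Y, incl A Y & met b Y].
Proof. by exists (ext2 A s t); split=> //; apply: incl_ext2. Qed.

Lemma acc_discharge b A : G A -> due b A ->
  exists Y, [/\ G Y, incl A Y & met b Y].
Proof.
move=> GA; case: b => [s|s t|s t|sg tau s t u|sg tau s t|x ss ts|a x ss ts
  |a s t u v|s].
- by move=> /(acc_DN HG GA) g; apply: ext1_met g _; right.
- move=> /(acc_BQ HG GA) [] g; apply: ext2_met g _.
  + by left; split; [right; left | right; right].
  + by right; split; [right; left | right; right].
- move=> /(acc_BE HG GA) [] g; apply: ext2_met g _.
  + by left; split; [right; left | right; right].
  + by right; split; [right; left | right; right].
- by move=> [h hu nu]; apply: ext1_met (acc_FQ HG GA h hu nu) _; right.
- move=> /(acc_FE HG GA) [x [hx g]].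
  by apply: ext1_met g _; exists x; split=> //; right.
- move=> [hs h1 h2]; have [hp [i [sg [hi g]]]] := acc_Mat HG GA hs h1 h2.
  by apply: ext1_met g _; split=> //; exists i, sg; split=> //; right.
- move=> [ha hs h]; have [hp [i [sg [hi g]]]] := acc_Dec HG GA ha hs h.
  by apply: ext1_met g _; split=> //; exists i, sg; split=> //; right.
- move=> [ha h1 h2]; case: (acc_Con HG GA ha h1 h2) => g; apply: ext2_met g _.
  + by left; split; [right; left | right; right].
  + by right; split; [right; left | right; right].
- move=> [hc hs]; case: (hc A GA s hs) => g; apply: ext1_met g _.
  + by left; right.
  + by right; right.
Qed.

Section Union.
Variables (C : nat -> term B N -> Prop).
Hypothesis chainC : chain C.
Hypothesis fairC : forall b n, due b (C n) -> met b (union C).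

Lemma union_evident : evident o nty norm (union C).
Proof.
split.
- by move=> s [n h]; exact: (@fairC (ObDN s) n h).
- by move=> s t [n h]; exact: (@fairC (ObBQ s t) n h).
- by move=> s t [n h]; exact: (@fairC (ObBE s t) n h).
- by move=> sg tau s t [n h] u hu nu; exact: (@fairC (ObFQ sg tau s t u) n).
- by move=> sg tau s t [n h]; exact: (@fairC (ObFE sg tau s t) n h).
- move=> x ss ts hs h1 h2; have [n [g1 g2]] := union2_chain chainC h1 h2.
  exact: (@fairC (ObMat x ss ts) n).
- by move=> a x ss ts ha hs [n h]; exact: (@fairC (ObDec a x ss ts) n).
- move=> a s t u v ha h1 h2; have [n [g1 g2]] := union2_chain chainC h1 h2.
  exact: (@fairC (ObCon a s t u v) n).
Qed.

Lemma union_complete :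
  complete_acc o nty norm G -> complete_branch o nty norm (union C).
Proof. by move=> hc s hs; exact: (@fairC (ObCom s) 0). Qed.

End Union.

Lemma union_branch (C : nat -> term B N -> Prop) :
  (forall n, G (C n)) -> branch o nty norm (union C).
Proof. by move=> GC s [n]; apply: (acc_branch HG (GC n)). Qed.

End Extension.

Theorem lemma8p2 (B : countType) (o : B) (N : countType) (nty : N -> ty B)
  (norm : term B N -> term B N)
  (Hnames : forall (sg : ty B) (l : seq N), exists x, nty x = sg /\ x \notin l)
  (Hnorm : normalizer o nty norm)
  (G : (term B N -> Prop) -> Prop) (HG : acc o nty norm G)
  (A : term B N -> Prop) (HA : G A) :
  (exists E : term B N -> Prop,
      branch o nty norm E /\ evident o nty norm E /\ (forall s, A s -> E s)) /\
  (complete_acc o nty norm G ->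
   exists E : term B N -> Prop,
      branch o nty norm E /\ evident o nty norm E /\
      complete_branch o nty norm E /\ (forall s, A s -> E s)).
Proof.
have [C [C0 GC chainC fairC]] :=
  exists_fair_chain (@due_mono _ o _ nty norm G) (@met_mono _ _ nty norm)
    (acc_discharge HG) HA.
have A_union : forall s, A s -> union C s by rewrite -C0; apply: incl_union.
have branchE := union_branch HG GC.
have evidentE := union_evident chainC fairC.
split=> [|complG]; exists (union C).
  exact: (conj branchE (conj evidentE A_union)).
have completeE := union_complete fairC complG.
exact: (conj branchE (conj evidentE (conj completeE A_union))).
Qed.
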